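(* Let $0<\phi<90^\circ$ be the vertical apex angle of the obstacle sensor, let $v_{xy}>0$ and $v_z=\tan(\phi/2)\,v_{xy}$, and consider the visibility-constrained planning graph described in the context. For a node at position $p_n$ and a target position $p_t$ (both voxel centers), let $d=p_n-p_t=(d_x,d_y,d_z)$ and define $$z_e=\min\Big(|d_z|,\ \tan\tfrac{\phi}{2}\sqrt{d_x^2+d_y^2}\Big),\qquad z_z=\frac{\max(0,|d_z|-z_e)}{v_z}\sqrt{v_{xy}^2+v_z^2},$$ $$h(d)=\sqrt{d_x^2+d_y^2+z_e^2}+z_z .$$ Then $h$ is an admissible heuristic for A* search in this graph, i.e. for every node, $h(p_n-p_t)$ is at most the cost of a shortest path in the graph from that node to any node located at the target position $p_t$.
   Context: Planning graph: space is partitioned into an anisotropic regular voxel grid whose voxels have horizontal edge lengths $v_{xy}$ (in $x$ and $y$) and height $v_z=\tan(\phi/2)v_{xy}$. Vertices correspond to voxel centers (possibly augmented by an additional discrete flight-direction coordinate taking one of eight planar directions; this extra coordinate only restricts which edges are present). Each voxel center is connected by edges to the centers of the voxels in its 26-neighborhood (Moore neighborhood), except that the two edges to the voxels directly above and directly below are removed; some further edges (large changes of flight direction) may also be removed. Thus every edge changes position by a vector $(a v_{xy}, b v_{xy}, c v_z)$ with $a,b,c\in\{-1,0,1\}$ and $(a,b)\neq(0,0)$. The cost of an edge is at least the Euclidean length of this displacement (additional nonnegative costs such as obstacle-proximity costs may be added), and the cost of a path is the sum of its edge costs. A heuristic is admissible if it never overestimates the cost of the cheapest path to the target. *)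

From Stdlib Require Import Reals Lra ZArith List.
Open Scope R_scope.

(* Voxel index (i,j,k) in Z^3; voxel center at (i*vxy, j*vxy, k*vz). *)
Definition voxel := (Z * Z * Z)%type.

Definition vz (phi vxy : R) : R := tan (phi / 2) * vxy.

Definition vx_of (v : voxel) : Z := fst (fst v).
Definition vy_of (v : voxel) : Z := snd (fst v).
Definition vzi_of (v : voxel) : Z := snd v.

Definition valid_step (u v : voxel) : Prop :=
  let a := (vx_of v - vx_of u)%Z in
  let b := (vy_of v - vy_of u)%Z in
  let c := (vzi_of v - vzi_of u)%Z in
  (-1 <= a <= 1)%Z /\ (-1 <= b <= 1)%Z /\ (-1 <= c <= 1)%Z /\
  ~ (a = 0%Z /\ b = 0%Z).

Definition edge_len (phi vxy : R) (u v : voxel) : R :=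
  let a := IZR (vx_of v - vx_of u) * vxy in
  let b := IZR (vy_of v - vy_of u) * vxy in
  let c := IZR (vzi_of v - vzi_of u) * vz phi vxy in
  sqrt (a * a + b * b + c * c).

Definition heur (phi vxy dx dy dz : R) : R :=
  let ze := Rmin (Rabs dz) (tan (phi / 2) * sqrt (dx * dx + dy * dy)) in
  let zz := Rmax 0 (Rabs dz - ze) / vz phi vxy
            * sqrt (vxy * vxy + vz phi vxy * vz phi vxy) in
  sqrt (dx * dx + dy * dy + ze * ze) + zz.

Definition heur_vox (phi vxy : R) (n t : voxel) : R :=
  heur phi vxy (IZR (vx_of n - vx_of t) * vxy)
               (IZR (vy_of n - vy_of t) * vxy)
               (IZR (vzi_of n - vzi_of t) * vz phi vxy).

Fixpoint walk {V : Type} (E : V -> V -> Prop) (x : V) (l : list V) : Prop :=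
  match l with
  | nil => True
  | y :: l' => E x y /\ walk E y l'
  end.

Fixpoint walk_cost {V : Type} (cost : V -> V -> R) (x : V) (l : list V) : R :=
  match l with
  | nil => 0
  | y :: l' => cost x y + walk_cost cost y l'
  end.

From Stdlib Require Import Reals ZArith List Lra Lia Psatz.
Open Scope R_scope.

(* The heuristic is dominated by the norm M(d) = max(|d|, k |d_z|) with
   k = sqrt(v_xy^2 + v_z^2) / v_z, the length per unit of height of the
   steepest edge; the two agree when |d_z| exceeds the cone bound.  M is a
   norm, hence subadditive, and the cost of every edge dominates M of its
   displacement, since an edge rises by at most v_z while moving horizontally
   by at least v_xy.  So u |-> M(p_u - p_t) decreases along an edge by at most
   the edge cost, and telescoping along a path ending at p_t gives the bound. *)

Lemma last_cons {A : Type} (l : list A) (x d : A) : last (x :: l) d = last l x.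
Proof.
  revert x d; induction l as [|y l IH]; intros x d; [reflexivity|].
  change (last (y :: l) d = last (y :: l) x). rewrite !IH. reflexivity.
Qed.

Lemma walk_potential_le {V : Type} (E : V -> V -> Prop) (cost : V -> V -> R)
  (p : V -> R) :
  (forall u v, E u v -> p u <= cost u v + p v) ->
  forall n l, walk E n l -> p n <= walk_cost cost n l + p (last l n).
Proof.
  intros hp n l; revert n.
  induction l as [|y l IH]; intros n hw; [simpl; lra|].
  destruct hw as [hE hw].
  rewrite last_cons; simpl walk_cost.
  specialize (hp _ _ hE). specialize (IH _ hw). lra.
Qed.

Definition norm3 (x y z : R) : R := sqrt (x * x + y * y + z * z).

Lemma norm3_triangle x1 y1 z1 x2 y2 z2 :
  norm3 (x1 + x2) (y1 + y2) (z1 + z2) <= norm3 x1 y1 z1 + norm3 x2 y2 z2.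
Proof.
  unfold norm3.
  set (A := x1 * x1 + y1 * y1 + z1 * z1). set (B := x2 * x2 + y2 * y2 + z2 * z2).
  set (dot := x1 * x2 + y1 * y2 + z1 * z2).
  assert (hA : 0 <= A) by (unfold A; nra).
  assert (hB : 0 <= B) by (unfold B; nra).
  pose proof (sqrt_pos A). pose proof (sqrt_pos B).
  pose proof (sqrt_sqrt A hA). pose proof (sqrt_sqrt B hB).
  assert (cauchy_schwarz : dot <= sqrt A * sqrt B).
  { destruct (Rle_dec dot 0) as [h|h]; [nra|].
    rewrite <- sqrt_mult, <- (sqrt_square dot) by lra.
    apply sqrt_le_1_alt.
    (* Lagrange's identity *)
    assert (A * B - dot * dot = (x1 * y2 - x2 * y1) ^ 2 + (x1 * z2 - x2 * z1) ^ 2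
                                + (y1 * z2 - y2 * z1) ^ 2) by (unfold A, B, dot; ring).
    pose proof (pow2_ge_0 (x1 * y2 - x2 * y1)). pose proof (pow2_ge_0 (x1 * z2 - x2 * z1)).
    pose proof (pow2_ge_0 (y1 * z2 - y2 * z1)). lra. }
  rewrite <- (sqrt_square (sqrt A + sqrt B)) by lra.
  apply sqrt_le_1_alt.
  unfold A, B, dot in *. nra.
Qed.

Definition cone_norm (k x y z : R) : R := Rmax (norm3 x y z) (k * Rabs z).

Lemma cone_norm_triangle k x1 y1 z1 x2 y2 z2 : 0 <= k ->
  cone_norm k (x1 + x2) (y1 + y2) (z1 + z2) <= cone_norm k x1 y1 z1 + cone_norm k x2 y2 z2.
Proof.
  intro hk. unfold cone_norm. apply Rmax_lub.
  - eapply Rle_trans; [apply norm3_triangle|].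
    apply Rplus_le_compat; apply Rmax_l.
  - apply Rle_trans with (k * Rabs z1 + k * Rabs z2).
    + rewrite <- Rmult_plus_distr_l. apply Rmult_le_compat_l; [lra|apply Rabs_triang].
    + apply Rplus_le_compat; apply Rmax_r.
Qed.

Lemma cone_norm_0 k : cone_norm k 0 0 0 = 0.
Proof.
  unfold cone_norm, norm3.
  rewrite !Rmult_0_l, !Rplus_0_r, sqrt_0, Rabs_R0, Rmult_0_r.
  apply Rmax_left; lra.
Qed.

Lemma cone_norm_step_le (h w a b c : R) : 0 < h -> 0 < w ->
  c * c <= 1 <= a * a + b * b ->
  cone_norm (sqrt (w * w + h * h) / h) (a * w) (b * w) (c * h)
  <= norm3 (a * w) (b * w) (c * h).
Proof.
  intros hh hw [hc hab]. unfold cone_norm, norm3. apply Rmax_lub; [lra|].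
  rewrite Rabs_mult, (Rabs_pos_eq h) by lra.
  replace (sqrt (w * w + h * h) / h * (Rabs c * h))
    with (sqrt (w * w + h * h) * Rabs c) by (field; lra).
  rewrite <- sqrt_Rsqr_abs, <- sqrt_mult by (unfold Rsqr; nra).
  apply sqrt_le_1_alt. unfold Rsqr. nra.
Qed.

Lemma heur_le_cone_norm phi vxy dx dy dz : 0 < tan (phi / 2) -> 0 < vxy ->
  heur phi vxy dx dy dz
  <= cone_norm (sqrt (vxy * vxy + vz phi vxy * vz phi vxy) / vz phi vxy) dx dy dz.
Proof.
  intros ht hv. unfold heur, cone_norm, norm3, vz. set (t := tan (phi / 2)) in *.
  set (r := sqrt (dx * dx + dy * dy)).
  assert (hr : 0 <= r) by apply sqrt_pos.
  assert (er : r * r = dx * dx + dy * dy) by (apply sqrt_sqrt; nra).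
  assert (ez : Rabs dz * Rabs dz = dz * dz) by (rewrite <- Rabs_mult; apply Rabs_pos_eq; nra).
  pose proof (Rabs_pos dz).
  destruct (Rle_dec (Rabs dz) (t * r)) as [below|above].
  - rewrite Rmin_left, ez, Rminus_diag, Rmax_left by lra.
    unfold Rdiv. rewrite !Rmult_0_l, Rplus_0_r. apply Rmax_l.
  - rewrite Rmin_right, Rmax_right by lra.
    set (S := sqrt (1 + t * t)).
    assert (scale : forall s, 0 <= s -> sqrt (s * s * (1 + t * t)) = s * S).
    { intros s hs. unfold S. rewrite sqrt_mult, sqrt_square by nra. reflexivity. }
    replace (dx * dx + dy * dy + t * r * (t * r)) with (r * r * (1 + t * t)) by (rewrite <- er; ring).
    replace (vxy * vxy + t * vxy * (t * vxy)) with (vxy * vxy * (1 + t * t)) by ring.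
    rewrite !scale by lra.
    replace (r * S + (Rabs dz - t * r) / (t * vxy) * (vxy * S))
      with (vxy * S / (t * vxy) * Rabs dz) by (field; lra).
    apply Rmax_r.
Qed.

Definition cone_dist (phi vxy : R) (u v : voxel) : R :=
  cone_norm (sqrt (vxy * vxy + vz phi vxy * vz phi vxy) / vz phi vxy)
    (IZR (vx_of u - vx_of v) * vxy) (IZR (vy_of u - vy_of v) * vxy)
    (IZR (vzi_of u - vzi_of v) * vz phi vxy).

Lemma cone_dist_triangle phi vxy u v w : 0 < vz phi vxy ->
  cone_dist phi vxy u w <= cone_dist phi vxy u v + cone_dist phi vxy v w.
Proof.
  intro hvz. unfold cone_dist.
  eapply Rle_trans; [|apply cone_norm_triangle].
  - right. f_equal; rewrite !minus_IZR; ring.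
  - apply Rle_mult_inv_pos; [apply sqrt_pos|exact hvz].
Qed.

Lemma cone_dist_refl phi vxy u : cone_dist phi vxy u u = 0.
Proof. unfold cone_dist. rewrite !Z.sub_diag, !Rmult_0_l. apply cone_norm_0. Qed.

Lemma cone_dist_le_edge_len phi vxy u v : 0 < vxy -> 0 < vz phi vxy ->
  valid_step u v -> cone_dist phi vxy u v <= edge_len phi vxy u v.
Proof.
  intros hv hvz (ha & hb & hc & hab).
  set (a := (vx_of u - vx_of v)%Z). set (b := (vy_of u - vy_of v)%Z).
  set (c := (vzi_of u - vzi_of v)%Z).
  assert (hc2 : (c * c <= 1)%Z) by (unfold c; nia).
  assert (hab2 : (1 <= a * a + b * b)%Z).
  { assert (a <> 0%Z \/ b <> 0%Z) as [ha0|hb0] by (unfold a, b; lia); nia. }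
  apply IZR_le in hc2. apply IZR_le in hab2.
  rewrite mult_IZR in hc2. rewrite plus_IZR, !mult_IZR in hab2.
  eapply Rle_trans; [apply cone_norm_step_le; auto|].
  unfold norm3, edge_len. right. f_equal.
  unfold a, b, c. rewrite !minus_IZR. ring.
Qed.

Theorem corollary1 (phi vxy : R) (V : Type) (pos : V -> voxel)
  (E : V -> V -> Prop) (cost : V -> V -> R) :
  0 < phi < PI / 2 ->
  0 < vxy ->
  (forall u v, E u v -> valid_step (pos u) (pos v)) ->
  (forall u v, E u v -> edge_len phi vxy (pos u) (pos v) <= cost u v) ->
  forall (n : V) (l : list V) (t : voxel),
    walk E n l ->
    pos (last l n) = t ->
    heur_vox phi vxy (pos n) t <= walk_cost cost n l.
Proof.
  intros hphi hv hstep hcost n l t hw hl.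
  assert (ht : 0 < tan (phi / 2)) by (apply tan_gt_0; lra).
  assert (hvz : 0 < vz phi vxy) by (unfold vz; nra).
  assert (consistent : forall u v, E u v ->
            cone_dist phi vxy (pos u) t <= cost u v + cone_dist phi vxy (pos v) t).
  { intros u v hE.
    eapply Rle_trans; [apply cone_dist_triangle with (v := pos v); exact hvz|].
    apply Rplus_le_compat_r. eapply Rle_trans; [|apply hcost; exact hE].
    apply cone_dist_le_edge_len; auto. }
  pose proof (walk_potential_le E cost (fun u => cone_dist phi vxy (pos u) t)
                consistent n l hw) as bound.
  simpl in bound. rewrite hl, cone_dist_refl, Rplus_0_r in bound.
  eapply Rle_trans; [apply heur_le_cone_norm; assumption|exact bound].
Qed.
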